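(* Let $X$ be a normal topological space, and let $f,g\colon X\to Y$ and $f',g'\colon Y\to Z$ be continuous maps. Then $\mathrm{D}(f'\circ f,g'\circ g)\leq \mathrm{D}(f,g)+\mathrm{D}(f',g')$.
   Context: For continuous maps $f,g\colon X\to Y$, the homotopic distance $\mathrm{D}(f,g)$ is the least integer $n\geq 0$ such that there is an open cover $\{U_0,\dots,U_n\}$ of $X$ with $f|_{U_j}\simeq g|_{U_j}$ for all $j$; if no such cover exists, $\mathrm{D}(f,g)=\infty$. *)

From HB Require Import structures.
From mathcomp Require Import all_boot all_order all_algebra.
From mathcomp Require Import all_classical all_reals all_analysis.
From mathcomp Require Import Rstruct Rstruct_topology.


Set Implicit Arguments.
Unset Strict Implicit.
Unset Printing Implicit Defensive.

Import Order.TTheory GRing.Theory Num.Theory.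
Local Open Scope classical_set_scope.
Local Open Scope ring_scope.

(* [f|_U ~ g|_U]: there is a homotopy H : U x [0,1] -> Y, i.e. a map
   continuous on the subspace U x [0,1] of X x R, with H(x,0) = f x and
   H(x,1) = g x for x in U. *)
Definition homotopic_on {X Y : topologicalType} (U : set X) (f g : X -> Y) :=
  exists H : X * Rdefinitions.R -> Y,
    {within U `*` `[0%R, 1%R], continuous H} /\
    (forall x, U x -> H (x, 0%R) = f x) /\
    (forall x, U x -> H (x, 1%R) = g x).

Definition hdist_le {X Y : topologicalType} (f g : X -> Y) (n : nat) :=
  exists U : nat -> set X,
    (forall j : nat, (j <= n)%N -> open (U j)) /\
    (forall x : X, exists2 j : nat, (j <= n)%N & U j x) /\
    (forall j : nat, (j <= n)%N -> homotopic_on (U j) f g).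

(* Homotopic distance D(f,g) as an extended real: the least such n,
   or +oo if no such cover exists (inf of the empty set is +oo). *)
Definition hdist {X Y : topologicalType} (f g : X -> Y) : \bar Rdefinitions.R :=
  ereal_inf [set (n%:R)%:E | n in [set n | hdist_le f g n]].

(* Take open covers U_0, ..., U_n of X on which f ~ g and V_0, ..., V_m of Y
   on which f' ~ g'.  On U_i /\ f^-1(V_j) we have f' o f ~ g' o f ~ g' o g.
   Normality gives functions phi_i, psi_j >= 0 with {phi_i > 0} in U_i and
   {psi_j > 0} in f^-1(V_j), not all vanishing at any point.  For nonempty
   index sets S, T let W(S, T) be the open set where the products
   phi_i psi_j with (i, j) in S x T are positive and strictly larger than all
   the others.  Every point lies in W(S, T) for S, T the indices where phi and
   psi are maximal, and two such sets with the same |S| + |T| are equal or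
   disjoint.  So W_k, the union of the W(S, T) with |S| + |T| = k + 2, for
   k <= n + m, form an open cover of X by n + m + 1 sets, on each of which the
   homotopies on the pieces glue to one. *)

From HB Require Import structures.
From mathcomp Require Import all_boot all_order all_algebra.
From mathcomp Require Import all_classical all_reals all_analysis.
From mathcomp Require Import Rstruct Rstruct_topology.
From mathcomp Require Import lra zify.

Set Implicit Arguments.
Unset Strict Implicit.
Unset Printing Implicit Defensive.

Import Order.TTheory GRing.Theory Num.Theory.
Local Open Scope classical_set_scope.
Local Open Scope ring_scope.

Notation R := Rdefinitions.R.

Lemma continuous_withinP {T U : topologicalType} (A : set T) (f : T -> U) :
  {within A, continuous f} <->
  forall x, A x -> forall N, nbhs (f x) N -> nbhs x [set y | A y -> N (f y)].
Proof.
rewrite /from_subspace subspace_continuousP.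
by split=> cf x Ax N Nfx; apply: (cf x Ax N Nfx).
Qed.

Lemma continuous_within_comp {T U V : topologicalType} (A : set T) (B : set U)
    (p : T -> U) (h : U -> V) :
  {within A, continuous p} -> (forall x, A x -> B (p x)) ->
  {within B, continuous h} -> {within A, continuous (h \o p)}.
Proof.
move=> /continuous_withinP cp AB /continuous_withinP ch.
apply/continuous_withinP => x Ax N /(ch _ (AB _ Ax)) /(cp _ Ax).
by apply: filterS => y hy Ay; exact: hy Ay (AB _ Ay).
Qed.

(* Unlike [withinU_continuous], [A] itself need not be closed. *)
Lemma continuous_within_paste {T U : topologicalType} (A C1 C2 : set T)
    (f : T -> U) :
  closed C1 -> closed C2 -> A `<=` C1 `|` C2 ->
  {within A `&` C1, continuous f} -> {within A `&` C2, continuous f} ->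
  {within A, continuous f}.
Proof.
move=> cC1 cC2 AC /continuous_withinP cf1 /continuous_withinP cf2.
apply/continuous_withinP => x Ax N Nfx.
have near_piece (C : set T) : closed C -> {within A `&` C, continuous f} ->
    nbhs x [set y | A y -> C y -> N (f y)].
  move=> cC /continuous_withinP cfC; have [Cx|nCx] := pselect (C x).
    by apply: filterS (cfC x (conj Ax Cx) N Nfx) => y hy Ay Cy; exact: hy.
  have : nbhs x (~` C) by apply: open_nbhs_nbhs; split => //; exact: closed_openC.
  by apply: filterS => y nCy _ /nCy.
apply: filterS (filterI (near_piece _ cC1 _) (near_piece _ cC2 _)).
- by move=> y [h1 h2] /[dup] Ay /AC [/(h1 Ay)|/(h2 Ay)].
- exact/continuous_withinP.
- exact/continuous_withinP.
Qed.

Lemma continuous_within_local {T U : topologicalType} (A : set T) (f : T -> U) :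
  (forall x, A x -> exists2 W, open W /\ W x & {within A `&` W, continuous f}) ->
  {within A, continuous f}.
Proof.
move=> loc; apply/continuous_withinP => x Ax N Nfx.
have [W [oW Wx] /continuous_withinP cfW] := loc x Ax.
have nW : nbhs x W by exact: open_nbhs_nbhs.
apply: filterS (filterI nW (cfW x (conj Ax Wx) N Nfx)) => y [Wy hy] Ay.
exact: hy.
Qed.

Lemma continuous_prod_map {X Y : topologicalType} (f : X -> Y) (h : R -> R) :
  continuous f -> continuous h -> continuous (fun p : X * R => (f p.1, h p.2)).
Proof.
move=> cf ch p; apply: (@cvg_pair _ _ _ _ (nbhs (f p.1)) (nbhs (h p.2))).
- by apply: (continuous_comp (f := fst)); [exact: cvg_fst | exact: cf].
- by apply: (continuous_comp (f := snd)); [exact: cvg_snd | exact: ch].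
Qed.

Lemma affine_continuous (a b : R) : continuous (fun t : R => a * t + b).
Proof.
move=> t; apply: (@continuousD R R^o); last exact: cvg_cst.
by apply: continuousM; [exact: cvg_cst | exact: cvg_id].
Qed.

Lemma homotopic_onS {X Y : topologicalType} (U W : set X) (f g : X -> Y) :
  W `<=` U -> homotopic_on U f g -> homotopic_on W f g.
Proof.
move=> WU [H [cH [H0 H1]]]; exists H; split; last split.
- by apply: continuous_subspaceW cH => -[x t] [/= /WU].
- by move=> x /WU; exact: H0.
- by move=> x /WU; exact: H1.
Qed.

Lemma homotopic_on_postcomp {X Y Z : topologicalType} (U : set X)
    (f g : X -> Y) (h : Y -> Z) :
  continuous h -> homotopic_on U f g -> homotopic_on U (h \o f) (h \o g).
Proof.
move=> ch [H [cH [H0 H1]]]; exists (h \o H); split; last split.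
- apply: (continuous_within_comp (B := setT) cH) => //.
  exact: continuous_subspaceT.
- by move=> x Ux /=; rewrite H0.
- by move=> x Ux /=; rewrite H1.
Qed.

Lemma homotopic_on_precomp {X Y Z : topologicalType} (V : set Y)
    (f : X -> Y) (f' g' : Y -> Z) :
  continuous f -> homotopic_on V f' g' ->
  homotopic_on (f @^-1` V) (f' \o f) (g' \o f).
Proof.
move=> cf [G [cG [G0 G1]]].
exists (G \o (fun p : X * R => (f p.1, p.2))); split; last split.
- apply: (continuous_within_comp _ _ cG); last by move=> -[x t] [/= Vfx It].
  apply/continuous_subspaceT/(continuous_prod_map (h := id) cf) => t.
  exact: cvg_id.
- by move=> x Vfx /=; rewrite G0.
- by move=> x Vfx /=; rewrite G1.
Qed.

Lemma homotopic_on_trans {X Y : topologicalType} (U : set X) (f g h : X -> Y) :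
  homotopic_on U f g -> homotopic_on U g h -> homotopic_on U f h.
Proof.
move=> [H1 [cH1 [H10 H11]]] [H2 [cH2 [H20 H21]]].
pose K (p : X * R) : Y :=
  if p.2 <= 2^-1 then H1 (p.1, 2 * p.2) else H2 (p.1, 2 * p.2 - 1).
have reparam (H : X * R -> Y) (b : R) (C : set (X * R)) :
    {within U `*` `[0, 1], continuous H} ->
    (forall p, C p -> (U `*` `[0, 1]) (p.1, 2 * p.2 + b)) ->
    {within C, continuous (fun p => H (p.1, 2 * p.2 + b))}.
  move=> cH CUI; apply: (continuous_within_comp _ CUI cH).
  apply/continuous_subspaceT.
  apply: (continuous_prod_map (f := id) (h := fun t => 2 * t + b)).
    by move=> x; exact: cvg_id.
  exact: affine_continuous.
have closed_snd (P : set R) : closed P -> closed (snd @^-1` P : set (X * R)).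
  by apply: preimage_closed => p _; exact: cvg_snd.
exists K; split; last split.
- apply: (continuous_within_paste (C1 := snd @^-1` [set t : R | t <= 2^-1])
                                  (C2 := snd @^-1` [set t : R | 2^-1 <= t])).
  + by apply: closed_snd; exact: closed_le.
  + by apply: closed_snd; exact: closed_ge.
  + by move=> p _ /=; case: (lerP p.2 2^-1) => hp; [left | right; exact: ltW].
  + pose H1' p := H1 (p.1, 2 * p.2 + 0).
    apply: (subspace_eq_continuous (f := from_subspace _ H1')).
      by move=> p /set_mem [_ hp]; rewrite /from_subspace /H1' /K ifT ?addr0.
    apply: reparam => // -[x t] [[/= Ux]]; rewrite in_itv /= => /andP[t0 t1] ht.
    by split => //; rewrite /= in_itv /=; apply/andP; split; lra.
  + pose H2' p := H2 (p.1, 2 * p.2 - 1).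
    apply: (subspace_eq_continuous (f := from_subspace _ H2')).
      move=> p /set_mem [[Up _] hp]; rewrite /from_subspace /H2' /K.
      case: ifPn => // hp'.
      have -> : p.2 = 2^-1 by apply/eqP; rewrite eq_le hp'; exact: hp.
      have half2 : 2 * 2^-1 = 1 :> R by rewrite mulfV.
      by rewrite half2 subrr H11 ?H20.
    apply: reparam => // -[x t] [[/= Ux]]; rewrite in_itv /= => /andP[t0 t1] ht.
    by split => //; rewrite /= in_itv /=; apply/andP; split; lra.
- by move=> x Ux; rewrite /K /= ifT ?mulr0 ?addr0 ?H10 //; lra.
- move=> x Ux; rewrite /K /= ifF; last by apply/negbTE; rewrite -ltNge; lra.
  by rewrite mulr1 (_ : 2 - 1 = 1 :> R) ?H21 //; lra.
Qed.

Lemma homotopic_on_bigcup {X Y : topologicalType} {I : Type} (D : set I)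
    (Q : I -> set X) (f g : X -> Y) :
  (forall a, D a -> open (Q a)) ->
  (forall a b x, D a -> D b -> Q a x -> Q b x -> a = b) ->
  (forall a, D a -> homotopic_on (Q a) f g) ->
  homotopic_on (\bigcup_(a in D) Q a) f g.
Proof.
move=> oQ disjQ hQ.
have homotopies a : exists Ha : X * R -> Y, D a ->
    [/\ {within Q a `*` `[0, 1], continuous Ha},
        forall x, Q a x -> Ha (x, 0) = f x &
        forall x, Q a x -> Ha (x, 1) = g x].
  have [Da|nDa] := pselect (D a); last by exists (fun p => f p.1).
  by have [Ha [? [? ?]]] := hQ a Da; exists Ha.
have [H HP] := choice homotopies.
pose HQ p := if pselect (exists a, D a /\ Q a p.1) is left e
             then H (projT1 (cid e)) p else f p.1.
have HQE p a : D a -> Q a p.1 -> HQ p = H a p.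
  move=> Da Qa; rewrite /HQ; case: pselect => [e|[]]; last by exists a.
  by case: cid => b [Db Qb] /=; rewrite (disjQ b a p.1).
exists HQ; split; last split.
- apply: continuous_within_local => -[x t] [[a Da Qax] It].
  exists (fst @^-1` Q a).
    by split => //; apply: open_comp (oQ a Da) => q _; exact: cvg_fst.
  apply: (subspace_eq_continuous (f := from_subspace _ (H a))).
    by move=> -[y s] /set_mem [_ Qay]; rewrite /from_subspace (HQE _ a).
  have [cHa _ _] := HP a Da.
  by apply: continuous_subspaceW cHa => -[y s] [[_ Is] /= Qay].
- move=> x [a Da Qax]; have [_ Ha0 _] := HP a Da.
  by rewrite (HQE _ a) // Ha0.
- move=> x [a Da Qax]; have [_ _ Ha1] := HP a Da.
  by rewrite (HQE _ a) // Ha1.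
Qed.

Lemma homotopic_on_comp {X Y Z : topologicalType} (U : set X) (V : set Y)
    (f g : X -> Y) (f' g' : Y -> Z) :
  continuous f -> continuous g' ->
  homotopic_on U f g -> homotopic_on V f' g' ->
  homotopic_on (U `&` f @^-1` V) (f' \o f) (g' \o g).
Proof.
move=> cf cg' hfg hfg'; apply: (homotopic_on_trans (g := g' \o f)).
  by apply: homotopic_onS (homotopic_on_precomp cf hfg') => x [].
by apply: homotopic_onS (homotopic_on_postcomp cg' hfg) => x [].
Qed.

Section SubordinateFunctions.
Variables (X : topologicalType) (U : nat -> set X) (n : nat).
Hypothesis normalX : normal_space X.
Hypothesis openU : forall i, (i <= n)%N -> open (U i).
Hypothesis coverU : forall x, exists2 i, (i <= n)%N & U i x.

(* Shrinking the cover one set at a time: wherever the first [k] functions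
   vanish, the point is still covered by [U k], ..., [U n]. *)
Lemma subordinate_functions_upto k : (k <= n.+1)%N ->
  exists phi : nat -> X -> R, [/\ forall i, continuous (phi i),
    forall i x, 0 <= phi i x,
    forall i x, (i < k)%N -> 0 < phi i x -> U i x &
    forall x, (forall i, (i < k)%N -> phi i x = 0) ->
      exists2 i, (k <= i <= n)%N & U i x].
Proof.
elim: k => [_|k IH kn].
  by exists (fun _ _ => 0); split => // i x; exact: cvg_cst.
have [phi [cphi phi_ge0 phiU phi0U]] := IH (ltnW kn).
pose F := \bigcap_(i in [set i | (i < k)%N]) (phi i @^-1` [set 0]) `&`
          ~` \bigcup_(i in [set i | (k < i <= n)%N]) U i.
have closedF : closed F.
  apply: closedI.
    apply: closed_bigI => i _; apply: preimage_closed; last exact: closed_eq.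
    by move=> x _; exact: cphi.
  by apply/open_closedC/bigcup_open => i /andP[_ ni]; exact: openU.
have UkF : ~` U k `&` F = set0.
  apply/seteqP; split => // x [nUkx [phix0 nUx]].
  have [i /andP[ki ni] Uix] := phi0U x phix0.
  move: ki; rewrite leq_eqVlt => /orP[/eqP ik|ki]; first by rewrite -ik in Uix.
  by apply: nUx; exists i => //; apply/andP.
have [fk [cfk fk0 fk1 fk01]] :=
  @urysohn_ext_itv X R normalX _ _ _ _ (open_closedC (openU kn)) closedF UkF ltr01.
have fk_ge0 x : 0 <= fk x.
  by have := fk01 (fk x) (ex_intro2 _ _ x I erefl); rewrite /= in_itv => /andP[].
exists (fun i => if i == k then fk else phi i); split.
- by move=> i; case: eqP.
- by move=> i x; case: eqP.
- move=> i x; rewrite ltnS leq_eqVlt; case: eqP => [-> _|_ /= ik]; last exact: phiU.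
  move=> fkx; apply: contrapT => nUkx.
  have fkx0 : fk x = 0 := fk0 _ (ex_intro2 _ _ x nUkx erefl).
  by rewrite fkx0 ltxx in fkx.
- move=> x phix0; apply: contrapT => noU.
  have fkx0 : fk x = 0 by have := phix0 k (ltnSn k); rewrite eqxx.
  have Fx : F x.
    split=> [i /= ik|[i /andP[ki ni] Uix]].
      by have := phix0 i (ltnW ik); rewrite ifN // neq_ltn ik.
    by apply: noU; exists i => //; apply/andP.
  have fkx1 : fk x = 1 := fk1 _ (ex_intro2 _ _ x Fx erefl).
  by move: (@oner_neq0 R); rewrite -fkx1 fkx0 eqxx.
Qed.

Lemma subordinate_functions :
  exists phi : nat -> X -> R, [/\ forall i, continuous (phi i),
    forall i x, 0 <= phi i x,
    forall i x, (i <= n)%N -> 0 < phi i x -> U i x &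
    forall x, exists2 i, (i <= n)%N & 0 < phi i x].
Proof.
have [phi [cphi phi_ge0 phiU phi0U]] := subordinate_functions_upto (leqnn n.+1).
exists phi; split => // x; apply: contrapT => nphi.
have phix0 i : (i < n.+1)%N -> phi i x = 0.
  move=> ni; apply/eqP; rewrite eq_le phi_ge0 andbT leNgt; apply/negP => phix.
  by apply: nphi; exists i.
have [i /andP[ni ni']] := phi0U x phix0.
by have := leq_trans ni ni'; rewrite ltnn.
Qed.

End SubordinateFunctions.

Definition dominant {X : Type} {I : finType} (w : I -> X -> R) (P : {set I}) : set X :=
  [set x | (forall a b, a \in P -> b \notin P -> w b x < w a x) /\
           (forall a, a \in P -> 0 < w a x)].

Lemma open_lt_continuous {X : topologicalType} (u v : X -> R) :
  continuous u -> continuous v -> open [set x | u x < v x].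
Proof.
move=> cu cv; rewrite (_ : mkset _ = (fun x => v x - u x) @^-1` [set r | 0 < r]).
  apply: open_comp; last exact: open_gt.
  by move=> x _; exact: (@continuousB _ R^o X v u x (cv x) (cu x)).
by apply/seteqP; split => x /=; rewrite subr_gt0.
Qed.

Lemma dominant_open {X : topologicalType} {I : finType} (w : I -> X -> R)
    (P : {set I}) :
  (forall a, continuous (w a)) -> open (dominant w P).
Proof.
move=> cw; rewrite openE => x [domx posx]; rewrite /interior.
have near_dom : \forall y \near x, forall ab : I * I,
    ab.1 \in P -> ab.2 \notin P -> w ab.2 y < w ab.1 y.
  apply: filter_forall => -[a b] /=.
  have [aP|_] := boolP (a \in P); last by apply: nearW.
  have [bP|bnP] := boolP (b \in P); first by apply: nearW.
  have ltx := conj (open_lt_continuous (cw b) (cw a)) (domx a b aP bnP).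
  by apply: filterS (open_nbhs_nbhs ltx) => y + _ _.
have near_pos : \forall y \near x, forall a, a \in P -> 0 < w a y.
  apply: filter_forall => a; have [aP|_] := boolP (a \in P); last by apply: nearW.
  have cst0 : continuous (fun _ : X => 0 : R) by move=> ?; exact: cvg_cst.
  have posx' := conj (open_lt_continuous cst0 (cw a)) (posx a aP).
  by apply: filterS (open_nbhs_nbhs posx') => y + _.
apply: filterS (filterI near_dom near_pos) => y [dom pos].
by split => // a b; exact: (dom (a, b)).
Qed.

Lemma dominant_nested {X : Type} {I : finType} (w : I -> X -> R)
    (P Q : {set I}) x :
  dominant w P x -> dominant w Q x -> P \subset Q \/ Q \subset P.
Proof.
move=> [domP _] [domQ _].
have [|/fintype.subsetPn [a aP aQ]] := boolP (P \subset Q); first by left.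
right; apply/fintype.subsetP => b bQ; apply: contraT => bP.
by have := lt_trans (domP a b aP bP) (domQ b a bQ aQ); rewrite ltxx.
Qed.

Lemma setX_subset_eq_card {I J : finType} (S S' : {set I}) (T T' : {set J}) :
  (0 < #|S|)%N -> (0 < #|T|)%N -> finset.setX S T \subset finset.setX S' T' ->
  (#|S| + #|T| = #|S'| + #|T'|)%N -> S = S' /\ T = T'.
Proof.
move=> /card_gt0P [i iS] /card_gt0P [j jT] /fintype.subsetP sub cardE.
have SS' : S \subset S'.
  apply/fintype.subsetP => a aS.
  by have /sub/setXP[] : (a, j) \in finset.setX S T by apply/setXP.
have TT' : T \subset T'.
  apply/fintype.subsetP => b bT.
  by have /sub/setXP[] : (i, b) \in finset.setX S T by apply/setXP.
have := subset_leq_card SS'; have := subset_leq_card TT' => leT leS.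
by split; apply/eqP; rewrite eqEcard ?SS' ?TT' /=; lia.
Qed.

Definition mul_family {X : Type} {I J : finType} (phi : I -> X -> R)
  (psi : J -> X -> R) (ab : I * J) (x : X) : R := phi ab.1 x * psi ab.2 x.

(* The products that are maximal at [x] are exactly those of a maximal
   [phi i x] with a maximal [psi j x]. *)
Lemma dominant_setX {X : Type} {I J : finType} (phi : I -> X -> R)
    (psi : J -> X -> R) x :
  (forall i, 0 <= phi i x) -> (forall j, 0 <= psi j x) ->
  (exists i, 0 < phi i x) -> (exists j, 0 < psi j x) ->
  exists (S : {set I}) (T : {set J}), [/\ (0 < #|S|)%N, (0 < #|T|)%N &
    dominant (mul_family phi psi) (finset.setX S T) x].
Proof.
move=> phi_ge0 psi_ge0 [i1 phi1] [j1 psi1].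
have [i0 _ max_i0] := @arg_maxP _ _ _ i1 xpredT (phi^~ x) isT.
have [j0 _ max_j0] := @arg_maxP _ _ _ j1 xpredT (psi^~ x) isT.
have phi0 : 0 < phi i0 x := lt_le_trans phi1 (max_i0 i1 isT).
have psi0 : 0 < psi j0 x := lt_le_trans psi1 (max_j0 j1 isT).
exists [set i | phi i x == phi i0 x]%SET, [set j | psi j x == psi j0 x]%SET; split.
- by apply/card_gt0P; exists i0; rewrite inE.
- by apply/card_gt0P; exists j0; rewrite inE.
split=> [[a1 a2] [b1 b2]|[a1 a2]]; rewrite !inE /mul_family /=; last first.
  by move=> /andP[/eqP-> /eqP->]; exact: mulr_gt0.
move=> /andP[/eqP-> /eqP->] /nandP[/eqP nb|/eqP nb].
- have lt_b1 : phi b1 x < phi i0 x.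
    by rewrite lt_neqAle; apply/andP; split; [exact/eqP | exact: max_i0].
  apply: (le_lt_trans (y := phi b1 x * psi j0 x)); last by rewrite ltr_pM2r.
  by rewrite ler_wpM2l //; exact: max_j0.
- have lt_b2 : psi b2 x < psi j0 x.
    by rewrite lt_neqAle; apply/andP; split; [exact/eqP | exact: max_j0].
  apply: (le_lt_trans (y := phi i0 x * psi b2 x)); last by rewrite ltr_pM2l.
  by rewrite ler_wpM2r //; exact: max_i0.
Qed.

Lemma product_cover_refinement {X : topologicalType} (U V : nat -> set X)
    (n m : nat) :
  normal_space X ->
  (forall i, (i <= n)%N -> open (U i)) -> (forall x, exists2 i, (i <= n)%N & U i x) ->
  (forall j, (j <= m)%N -> open (V j)) -> (forall x, exists2 j, (j <= m)%N & V j x) ->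
  exists (D : nat -> set ({set 'I_n.+1} * {set 'I_m.+1}))
         (W : {set 'I_n.+1} * {set 'I_m.+1} -> set X),
  [/\ forall ST, open (W ST),
      forall x, exists2 k, (k <= n + m)%N & exists2 ST, D k ST & W ST x,
      forall k ST ST' x, D k ST -> D k ST' -> W ST x -> W ST' x -> ST = ST' &
      forall k ST, D k ST ->
        exists i j, [/\ (i <= n)%N, (j <= m)%N & W ST `<=` U i `&` V j]].
Proof.
move=> normalX oU cU oV cV.
have [phi [cphi phi_ge0 phiU phi_pos]] := subordinate_functions normalX oU cU.
have [psi [cpsi psi_ge0 psiV psi_pos]] := subordinate_functions normalX oV cV.
pose w := mul_family (fun i : 'I_n.+1 => phi i) (fun j : 'I_m.+1 => psi j).
exists (fun k => [set ST : {set 'I_n.+1} * {set 'I_m.+1} |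
  [/\ (0 < #|ST.1|)%N, (0 < #|ST.2|)%N & (#|ST.1| + #|ST.2| = k.+2)%N]]).
exists (fun ST => dominant w (finset.setX ST.1 ST.2)); split.
- move=> ST; apply: dominant_open => ab x.
  by apply: continuousM; [exact: cphi | exact: cpsi].
- move=> x.
  have [i ni phix] := phi_pos x; have [j mj psix] := psi_pos x.
  have [S [T [S0 T0 domx]]] := @dominant_setX _ _ _ (fun i : 'I_n.+1 => phi i)
    (fun j : 'I_m.+1 => psi j) x (phi_ge0^~ x) (psi_ge0^~ x)
    (ex_intro _ (Ordinal (ni : i < n.+1)%N) phix)
    (ex_intro _ (Ordinal (mj : j < m.+1)%N) psix).
  have := max_card S; have := max_card T; rewrite !card_ord => Tm Sn.
  exists (#|S| + #|T| - 2)%N; first by lia.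
  by exists (S, T) => //; split => //=; rewrite -addn2 subnK // (leq_add S0 T0).
- move=> k [S T] [S' T'] x /= [S0 T0 cardST] [S'0 T'0 cardST'] domx domx'.
  have [sub|sub] := dominant_nested domx domx'.
    by have [-> ->] := setX_subset_eq_card S0 T0 sub (etrans cardST (esym cardST')).
  by have [-> ->] := setX_subset_eq_card S'0 T'0 sub (etrans cardST' (esym cardST)).
- move=> k [S T] /= [/card_gt0P [i iS] /card_gt0P [j jT] _].
  exists i, j; split; [by rewrite -ltnS | by rewrite -ltnS |].
  move=> x [_ /(_ (i, j))].
  rewrite finset.in_setX iS jT /w /mul_family /= => /(_ isT) pos.
  have := phi_ge0 i x; have := psi_ge0 j x => psi0 phi0.
  split; [apply: phiU; last nra | apply: psiV; last nra]; by rewrite -ltnS.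
Qed.

Lemma hdist_le_comp {X Y Z : topologicalType} (f g : X -> Y) (f' g' : Y -> Z) n m :
  normal_space X -> continuous f -> continuous g' ->
  hdist_le f g n -> hdist_le f' g' m -> hdist_le (f' \o f) (g' \o g) (n + m).
Proof.
move=> normalX cf cg' [U [oU [cU hU]]] [V [oV [cV hV]]].
have oV' j : (j <= m)%N -> open (f @^-1` V j).
  by move=> mj; apply: open_comp (oV j mj) => x _; exact: cf.
have [D [W [oW cW disjW subW]]] :=
  product_cover_refinement normalX oU cU oV' (fun x => cV (f x)).
exists (fun k => \bigcup_(ST in D k) W ST); split; [|split].
- by move=> k _; apply: bigcup_open => ST _; exact: oW.
- by move=> x; have [k kle [ST DST Wx]] := cW x; exists k => //; exists ST.
- move=> k _; apply: homotopic_on_bigcup => [ST _|ST ST' x|ST DST].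
  + exact: oW.
  + exact: disjW.
  + have [i [j [ni mj sub]]] := subW k ST DST.
    exact: homotopic_onS sub (homotopic_on_comp cf cg' (hU i ni) (hV j mj)).
Qed.

Local Open Scope ereal_scope.

Lemma hdist_le_hdist {X Y : topologicalType} (f g : X -> Y) n :
  hdist_le f g n -> hdist f g <= n%:R%:E.
Proof. by move=> fgn; apply: ereal_inf_lbound; exists n. Qed.

Lemma hdist_min {X Y : topologicalType} (f g : X -> Y) n :
  hdist_le f g n -> exists2 k, hdist_le f g k & hdist f g = k%:R%:E.
Proof.
move=> fgn; have ex : exists k, `[< hdist_le f g k >] by exists n; apply/asboolP.
case: (ex_minnP ex) => k /asboolP fgk kmin; exists k => //.
apply/eqP; rewrite eq_le hdist_le_hdist //=.
apply: le_ereal_inf_tmp => _ [j fgj <-]; rewrite lee_fin ler_nat.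
by apply: kmin; exact/asboolP.
Qed.

Lemma hdist_neqNy {X Y : topologicalType} (f g : X -> Y) : hdist f g != -oo.
Proof.
rewrite -ltNye (lt_le_trans ltNy0) //.
by apply: le_ereal_inf_tmp => _ [j _ <-]; rewrite lee_fin ler0n.
Qed.

Lemma hdist_pinfty {X Y : topologicalType} (f g : X -> Y) :
  ~ (exists n, hdist_le f g n) -> hdist f g = +oo.
Proof.
by move=> nofg; apply/ereal_inf_pinfty => y [k fgk _]; case: nofg; exists k.
Qed.

Unset Implicit Arguments.

Theorem proposition3p19 (X Y Z : topologicalType) (f g : X -> Y) (f' g' : Y -> Z) :
  normal_space X ->
  continuous f -> continuous g -> continuous f' -> continuous g' ->
  hdist (f' \o f) (g' \o g) <= hdist f g + hdist f' g'.
Proof.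
(* Only f and g' need be continuous: the homotopy passes through g' o f. *)
move=> normalX cf _ _ cg'.
have [[n fgn]|nofg] := pselect (exists n, hdist_le f g n); last first.
  by rewrite (hdist_pinfty nofg) addye ?leey ?hdist_neqNy.
have [[m fgm']|nofg'] := pselect (exists m, hdist_le f' g' m); last first.
  by rewrite (hdist_pinfty nofg') addey ?leey ?hdist_neqNy.
have [k fgk ->] := hdist_min fgn.
have [l fgl' ->] := hdist_min fgm'.
by rewrite -EFinD -natrD; apply/hdist_le_hdist/hdist_le_comp.
Qed.
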